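(* Let $G$ be a weak FI-group, let $H\lhd G$ be a normal weak FI-subgroup, and fix $N\geq 0$. Then $H^{\leq N}$ is a normal weak FI-subgroup of $G$.
   Context: $\mathrm{FI}$ is the category of finite subsets of $\mathbb{N}$ and injections. For groups $A,B$, a homomorphism-modulo-conjugacy $A\to B$ is an equivalence class of homomorphisms under post-composition with conjugations by elements of $B$. A weak FI-group $G$ consists of: groups $G_I$ for finite $I\subset\mathbb{N}$; for each injection $f\colon I\hookrightarrow J$ a homomorphism-modulo-conjugacy $G_f\colon G_I\to G_J$ with $G_{\mathrm{id}}=\mathrm{id}$ and $G_{g\circ f}=G_g\circ G_f$ modulo conjugacy; and for each $I\subset J$ a homomorphism $G_I^J\colon G_I\to G_J$ representing $G_f$ for the inclusion $f$, with $G_J^K\circ G_I^J=G_I^K$. A normal weak FI-subgroup $H\lhd G$ is a choice of normal subgroups $H_I\lhd G_I$ with $G_f(H_I)\subset H_J$ for every injection $f\colon I\hookrightarrow J$. For $I\subset J$ set $H_J(I)=G_I^J(H_I)$. For $N\geq 0$ and finite $J$, $H^{\leq N}_J$ is the subgroup of $G_J$ generated by the $G_J$-conjugates of the subgroups $H_J(I)$ for $I\subset J$ with $|I|\leq N$. *)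

(* possibly infinite groups via mathcomp's [groupType]
   (boot/monoid.v), finite subsets of N via finmap's [{fset nat}]. *)
From HB Require Import structures.
From mathcomp Require Import all_boot.
From mathcomp Require Import finmap.

Set Implicit Arguments.
Unset Strict Implicit.
Unset Printing Implicit Defensive.

Local Open Scope fset_scope.
Local Open Scope group_scope.

Definition is_hom (A B : groupType) (f : A -> B) : Prop :=
  forall x y : A, f (x * y) = f x * f y.

(* Equality modulo conjugacy of two maps A -> B:
   phi = c_b o psi for some b in B (c_b(y) = b^-1 y b, any convention works). *)
Definition conj_equiv (A B : groupType) (phi psi : A -> B) : Prop :=
  exists b : B, forall x : A, phi x = (psi x) ^ b.

Definition id_map (I : {fset nat}) : {ffun I -> I} := [ffun x => x].
Definition comp_map (I J K : {fset nat}) (g : {ffun J -> K}) (f : {ffun I -> J})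
  : {ffun I -> K} := [ffun x => g (f x)].
Definition incl_map (I J : {fset nat}) (IJ : I `<=` J) : {ffun I -> J} :=
  [ffun x => fincl IJ x].

(* The homomorphism-modulo-conjugacy G_f is given by a
   chosen representative [Gmap f] (only meaningful for injective f);
   the identities G_id = id and G_{g o f} = G_g o G_f hold modulo conjugacy.
   [Gincl IJ] is the distinguished representative G_I^J for I ⊆ J. *)
Definition is_weakFIgroup (G : {fset nat} -> groupType)
  (Gmap : forall I J : {fset nat}, {ffun I -> J} -> G I -> G J)
  (Gincl : forall I J : {fset nat}, I `<=` J -> G I -> G J) : Prop :=
  [/\ (forall I J : {fset nat}, forall (f : {ffun I -> J}), injective f -> is_hom (Gmap I J f)),
      (forall I : {fset nat}, conj_equiv (Gmap I I (id_map I)) id) &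
      (forall I J K : {fset nat}, forall (f : {ffun I -> J}) (g : {ffun J -> K}),
          injective f -> injective g ->
          conj_equiv (Gmap I K (comp_map g f)) (Gmap J K g \o Gmap I J f))] /\
  [/\ (forall I J : {fset nat}, forall (IJ : I `<=` J), is_hom (Gincl I J IJ)),
      (forall I J : {fset nat}, forall (IJ : I `<=` J),
          conj_equiv (Gincl I J IJ) (Gmap I J (incl_map IJ))) &
      (forall I J K : {fset nat}, forall (IJ : I `<=` J) (JK : J `<=` K) (x : G I),
          Gincl J K JK (Gincl I J IJ x) = Gincl I K (fsubset_trans IJ JK) x)].

Definition is_subgroup (A : groupType) (S : A -> Prop) : Prop :=
  [/\ S 1, (forall x y, S x -> S y -> S (x * y)) & (forall x, S x -> S x^-1)].

Definition is_normal (A : groupType) (S : A -> Prop) : Prop :=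
  is_subgroup S /\ (forall x g : A, S x -> S (x ^ g)).

Definition gen_subgroup (A : groupType) (S : A -> Prop) : A -> Prop :=
  fun x => forall K : A -> Prop, is_subgroup K -> (forall y, S y -> K y) -> K x.

Definition is_normal_weakFIsubgroup (G : {fset nat} -> groupType)
  (Gmap : forall I J : {fset nat}, {ffun I -> J} -> G I -> G J)
  (H : forall I : {fset nat}, G I -> Prop) : Prop :=
  (forall I : {fset nat}, is_normal (H I)) /\
  (forall I J : {fset nat}, forall (f : {ffun I -> J}), injective f ->
      forall x : G I, H I x -> H J (Gmap I J f x)).

Definition H_restr (G : {fset nat} -> groupType)
  (Gincl : forall I J : {fset nat}, I `<=` J -> G I -> G J)
  (H : forall I : {fset nat}, G I -> Prop) (J I : {fset nat}) (IJ : I `<=` J)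
  : G J -> Prop :=
  fun y => exists2 h : G I, H I h & y = Gincl I J IJ h.

Definition H_le (G : {fset nat} -> groupType)
  (Gincl : forall I J : {fset nat}, I `<=` J -> G I -> G J)
  (H : forall I : {fset nat}, G I -> Prop) (N : nat) (J : {fset nat})
  : G J -> Prop :=
  gen_subgroup (fun y : G J =>
    exists (I : {fset nat}) (IJ : I `<=` J) (y0 g : G J),
      [/\ (#|` I| <= N)%N, H_restr Gincl H IJ y0 & y = y0 ^ g]).

(* A generator of H^{<= N}_I is a conjugate of G_{I'}^I(h) with h in H_{I'} and
   |I'| <= N.  For an injection f : I -> J, the two routes I' -> I -> J and
   I' -> f(I') -> J agree, so modulo conjugacy G_f (G_{I'}^I h) equals
   G_{f(I')}^J (G_{f|I'} h), a conjugate of an element of H_J(f(I')) with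
   |f(I')| <= N.  Hence G_f maps generators to generators, and so maps
   H^{<= N}_I into H^{<= N}_J; normality in G_J holds because conjugation is
   itself a homomorphism permuting the generators. *)
From HB Require Import structures.
From mathcomp Require Import all_boot.
From mathcomp Require Import finmap.

Set Implicit Arguments.
Unset Strict Implicit.
Unset Printing Implicit Defensive.

Local Open Scope fset_scope.
Local Open Scope group_scope.

Section Hom.

Variables (A B : groupType) (f : A -> B).
Hypothesis f_hom : is_hom f.

Lemma is_hom1 : f 1 = 1.
Proof. by apply: (@mulgI _ (f 1)); rewrite -f_hom !mulg1. Qed.

Lemma is_homV x : f x^-1 = (f x)^-1.
Proof. by apply/esym/mulg1_eq; rewrite -f_hom mulgV is_hom1. Qed.

Lemma is_homJ x g : f (x ^ g) = f x ^ f g.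
Proof. by rewrite !conjgE !f_hom is_homV. Qed.

End Hom.

Lemma is_hom_conjg (A : groupType) (g : A) : is_hom (conjg^~ g).
Proof. by move=> x y; rewrite conjMg. Qed.

Section ConjEquiv.

Variables (A B : groupType).

Lemma conj_equiv_sym (phi psi : A -> B) : conj_equiv phi psi -> conj_equiv psi phi.
Proof. by move=> [b e]; exists b^-1 => x; rewrite e conjgK. Qed.

Lemma conj_equiv_trans (phi psi chi : A -> B) :
  conj_equiv phi psi -> conj_equiv psi chi -> conj_equiv phi chi.
Proof. by move=> [b e] [c e']; exists (c * b) => x; rewrite e e' conjgM. Qed.

Lemma conj_equiv_compl (C : groupType) (h : B -> C) (phi psi : A -> B) :
  is_hom h -> conj_equiv phi psi -> conj_equiv (h \o phi) (h \o psi).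
Proof. by move=> h_hom [b e]; exists (h b) => x /=; rewrite e is_homJ. Qed.

Lemma conj_equiv_compr (C : groupType) (k : C -> A) (phi psi : A -> B) :
  conj_equiv phi psi -> conj_equiv (phi \o k) (psi \o k).
Proof. by move=> [b e]; exists b => x /=; rewrite e. Qed.

End ConjEquiv.

Lemma is_subgroup_gen (A : groupType) (S : A -> Prop) : is_subgroup (gen_subgroup S).
Proof.
split=> [K [] //|x y Sx Sy K K_sub SK|x Sx K K_sub SK]; case: (K_sub) => _ KM KV.
  exact: KM (Sx K K_sub SK) (Sy K K_sub SK).
exact: KV (Sx K K_sub SK).
Qed.

Lemma mem_gen_subgroup (A : groupType) (S : A -> Prop) x : S x -> gen_subgroup S x.
Proof. by move=> Sx K _ SK; apply: SK. Qed.

Lemma hom_gen_subgroup (A B : groupType) (S : A -> Prop) (T : B -> Prop) (f : A -> B) :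
  is_hom f -> (forall y, S y -> T (f y)) ->
  forall x, gen_subgroup S x -> gen_subgroup T (f x).
Proof.
move=> f_hom fST x Sx; apply: (Sx (fun x => gen_subgroup T (f x))) => [|y Sy].
  have [T1 TM TV] := is_subgroup_gen T.
  split=> [|a b Ta Tb|a Ta]; first by rewrite (is_hom1 f_hom).
    by rewrite f_hom; apply: TM.
  by rewrite (is_homV f_hom); apply: TV.
by apply: mem_gen_subgroup; apply: fST.
Qed.

Definition img (I J : {fset nat}) (f : {ffun I -> J}) (I' : {fset nat}) : {fset nat} :=
  [fset val (f x) | x in fsub I I'].

Lemma img_sub (I J : {fset nat}) (f : {ffun I -> J}) (I' : {fset nat}) : img f I' `<=` J.
Proof. by apply/fsubsetP=> _ /imfsetP [x _ ->]; apply: valP. Qed.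

Section Image.

Variables (I J I' : {fset nat}) (f : {ffun I -> J}) (s : I' `<=` I).
Local Notation img := (img f I').

Lemma img_card : (#|` img| <= #|` I'|)%N.
Proof.
apply: leq_trans (leq_imfset_card _ _ _) _.
by rewrite -(card_fsub s) -(card_uniqP (enum_finmem_uniq _)) (eq_card (enum_finmemE _)).
Qed.

Lemma mem_img (x : I') : val (f (fincl s x)) \in img.
Proof. exact: in_imfset (fincl_fsub s x). Qed.

Definition img_map : {ffun I' -> img} := [ffun x => [` mem_img x]].

Lemma img_map_inj : injective f -> injective img_map.
Proof.
move=> f_inj x y; rewrite !ffunE => /(congr1 val) /= /val_inj /f_inj.
exact: fincl_inj.
Qed.

Lemma comp_map_incl_img : comp_map f (incl_map s) = comp_map (incl_map (img_sub f I')) img_map.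
Proof. by apply/ffunP=> x; rewrite !ffunE; apply: val_inj. Qed.

End Image.

Lemma incl_map_inj (I J : {fset nat}) (s : I `<=` J) : injective (incl_map s).
Proof. by move=> x y; rewrite !ffunE; apply: fincl_inj. Qed.

Section WeakFIGroup.

Variables (G : {fset nat} -> groupType)
  (Gmap : forall I J : {fset nat}, {ffun I -> J} -> G I -> G J)
  (Gincl : forall I J : {fset nat}, I `<=` J -> G I -> G J).
Hypothesis G_weakFI : is_weakFIgroup Gmap Gincl.

Lemma Gmap_hom (I J : {fset nat}) (f : {ffun I -> J}) : injective f -> is_hom (Gmap f).
Proof. by case: G_weakFI => -[Gmap_hom _ _] _; apply: Gmap_hom. Qed.

Lemma Gmap_comp (I J K : {fset nat}) (f : {ffun I -> J}) (g : {ffun J -> K}) :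
  injective f -> injective g -> conj_equiv (Gmap (comp_map g f)) (Gmap g \o Gmap f).
Proof. by case: G_weakFI => -[_ _ Gmap_comp] _; apply: Gmap_comp. Qed.

Lemma Gincl_Gmap (I J : {fset nat}) (s : I `<=` J) :
  conj_equiv (Gincl s) (Gmap (incl_map s)).
Proof. by case: G_weakFI => _ [_ Gincl_Gmap _]; apply: Gincl_Gmap. Qed.

Lemma Gmap_Gincl (I J I' : {fset nat}) (f : {ffun I -> J}) (s : I' `<=` I) :
  injective f ->
  conj_equiv (Gmap f \o Gincl s) (Gincl (img_sub f I') \o Gmap (img_map f s)).
Proof.
move=> f_inj; have fs_inj := img_map_inj (s:=s) f_inj.
apply: conj_equiv_trans (conj_equiv_compl (Gmap_hom f_inj) (Gincl_Gmap s)) _.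
apply: conj_equiv_trans (conj_equiv_sym (Gmap_comp (@incl_map_inj _ _ s) f_inj)) _.
rewrite comp_map_incl_img.
apply: conj_equiv_trans (Gmap_comp fs_inj (@incl_map_inj _ _ (img_sub f I'))) _.
exact/conj_equiv_compr/conj_equiv_sym/Gincl_Gmap.
Qed.

Variables (H : forall I : {fset nat}, G I -> Prop) (N : nat).
Hypothesis H_normal : is_normal_weakFIsubgroup Gmap H.

Definition H_le_gens (J : {fset nat}) (y : G J) : Prop :=
  exists (I : {fset nat}) (IJ : I `<=` J) (y0 g : G J),
    [/\ (#|` I| <= N)%N, H_restr Gincl H IJ y0 & y = y0 ^ g].

Lemma H_le_gensJ (J : {fset nat}) (y g : G J) : H_le_gens y -> H_le_gens (y ^ g).
Proof.
move=> [I [IJ [y0 [g0 [IN Hy0 ->]]]]].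
by exists I, IJ, y0, (g0 * g); rewrite conjgM.
Qed.

Lemma Gmap_H_le_gens (I J : {fset nat}) (f : {ffun I -> J}) (y : G I) :
  injective f -> H_le_gens y -> H_le_gens (Gmap f y).
Proof.
move=> f_inj [I' [s [_ [g [I'N [h Hh ->] ->]]]]].
have [c /= e] := Gmap_Gincl s f_inj.
exists (img f I'), (img_sub f I'), (Gincl (img_sub f I') (Gmap (img_map f s) h)),
  (c * Gmap f g); split.
- exact: leq_trans (img_card f s) I'N.
- exists (Gmap (img_map f s) h) => //.
  exact: H_normal.2 (img_map_inj (s:=s) f_inj) _ _.
- by rewrite (is_homJ (Gmap_hom f_inj)) e conjgM.
Qed.

End WeakFIGroup.

Theorem lemma2p19
  (G : {fset nat} -> groupType)
  (Gmap : forall I J : {fset nat}, {ffun I -> J} -> G I -> G J)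
  (Gincl : forall I J : {fset nat}, I `<=` J -> G I -> G J)
  (H : forall I : {fset nat}, G I -> Prop)
  (N : nat) :
  @is_weakFIgroup G Gmap Gincl ->
  @is_normal_weakFIsubgroup G Gmap H ->
  @is_normal_weakFIsubgroup G Gmap (@H_le G Gincl H N).
Proof.
move=> G_weakFI H_normal; split=> [I | I J f f_inj x].
- split=> [|x g Hx]; first exact: is_subgroup_gen.
  apply: hom_gen_subgroup (is_hom_conjg g) _ x Hx => y.
  exact: H_le_gensJ.
- apply: hom_gen_subgroup (Gmap_hom G_weakFI f_inj) _ x => y.
  exact: Gmap_H_le_gens.
Qed.
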